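(* There exists a nonnegative sequence $\{\lambda_n\}_{n=1}^\infty\in\mathrm{GBV}$ with $\{\lambda_n\}\notin R_0^+\mathrm{BV}$ such that $$\sum_{n=1}^\infty n^{p+p\gamma-2}\lambda_n^p<\infty$$ for every $1<p<\infty$ and every $\gamma$ with $1/p-1<\gamma<1/p$.
   Context: $\Delta c_n:=c_n-c_{n+1}$. A sequence $\mathbf c=\{c_n\}_{n=1}^\infty$ belongs to the class $\mathrm{GBV}$ if $c_n\ge 0$ for all $n$, $c_n\to 0$ as $n\to\infty$, and there is a positive constant $M(\mathbf c)$ depending only on $\mathbf c$ such that $\sum_{n=m}^{2m}|\Delta c_n|\le M(\mathbf c)\,c_m$ for all $m=1,2,\dots$. A nonnegative sequence $\mathbf b=\{b_n\}$ with $b_n\to0$ belongs to $R_0^+\mathrm{BV}$ (''rest bounded variation'') if there is a constant $M(\mathbf b)$ depending only on $\mathbf b$ such that $\sum_{n=m}^\infty|b_n-b_{n+1}|\le M(\mathbf b)\,b_m$ for all $m=1,2,\dots$. *)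

(* Sequences are nat -> R; the paper's index set
   {1,2,...} is used, the value at index 0 is ignored. *)
From HB Require Import structures.
From mathcomp Require Import all_boot all_order all_algebra.
From mathcomp Require Import all_classical all_reals all_analysis.
Set Implicit Arguments. Unset Strict Implicit. Unset Printing Implicit Defensive.
Import Order.TTheory GRing.Theory Num.Theory.
Import numFieldNormedType.Exports.
Local Open Scope classical_set_scope.
Local Open Scope ring_scope.

Definition Delta (R : realType) (c : nat -> R) (n : nat) : R := c n - c n.+1.

Definition GBV (R : realType) (c : nat -> R) : Prop :=
  (forall n, (1 <= n)%N -> 0 <= c n) /\
  c @ \oo --> (0 : R) /\
  exists M : R, 0 < M /\
    forall m, (1 <= m)%N ->
      \sum_(m <= n < (2 * m).+1) `|Delta c n| <= M * c m.

(* Class R_0^+ BV ("rest bounded variation"); the tail sum is taken in the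
   extended reals (it may a priori diverge). *)
Definition R0BV (R : realType) (b : nat -> R) : Prop :=
  (forall n, (1 <= n)%N -> 0 <= b n) /\
  b @ \oo --> (0 : R) /\
  exists M : R,
    forall m, (1 <= m)%N ->
      (\sum_(m <= n <oo) (`|b n - b n.+1|)%:E <= (M * b m)%:E)%E.

From HB Require Import structures.
From mathcomp Require Import all_boot all_order all_algebra.
From mathcomp Require Import all_classical all_reals all_analysis.
From mathcomp Require Import zify ring lra.
Import Order.TTheory GRing.Theory Num.Theory.
Import numFieldNormedType.Exports.
Local Open Scope classical_set_scope.
Local Open Scope ring_scope.

(* The sequence is constant on the dyadic blocks [2^j, 2^(j+1)), with value
   2^-(e_j) where e_j = 2 + 6 * 2^t - j for 2^t <= j < 2^(t+1).  A window
   [m, 2m] meets at most one block boundary, and consecutive block values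
   differ by at most a factor 2, so the sequence is in GBV with constant 3.
   Along the blocks j in [2^t, 2^(t+1)) the exponent decreases, so the values
   grow by the factor 2^(2^t - 1) between n = 2^(2^t) and n = 2^(2^(t+1) - 1):
   the tail variation from m is not O(lam_m), and the sequence is not in
   R_0^+BV.  Finally e_j >= 2j + 2 gives lam_n <= (n+1)^-2, and since
   p + p gamma - 2 < p - 1 and n lam_n <= 1, the n-th term of the weighted
   series is at most lam_n <= 1/(n(n+1)). *)

Local Notation log2 := (trunc_log 2).

Lemma log2_ltn n : (n < 2 ^ (log2 n).+1)%N.
Proof. exact: trunc_log_ltn. Qed.

Lemma log2_eq n k : (2 ^ k <= n < 2 ^ k.+1)%N -> log2 n = k.
Proof. exact: trunc_log_eq. Qed.

(* For 2^t <= j < 2^(t+1) this is 2 + 6 * 2^t - j, never truncated. *)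
Definition block_exp (j : nat) : nat := (2 + 6 * 2 ^ log2 j - j)%N.

Lemma block_exp_ge j : (2 * j + 2 <= block_exp j)%N.
Proof. by have := log2_ltn j; rewrite expnS /block_exp; lia. Qed.

Lemma block_exp_leS j : (block_exp j <= (block_exp j.+1).+1)%N.
Proof.
have : (2 ^ log2 j <= 2 ^ log2 j.+1)%N by rewrite leq_pexp2l // leq_trunc_log.
by have := log2_ltn j; rewrite expnS /block_exp; lia.
Qed.

Lemma sq_le_exp2_block_exp n : (n.+1 ^ 2 <= 2 ^ block_exp (log2 n))%N.
Proof.
apply: (@leq_trans ((2 ^ (log2 n).+1) ^ 2)); first by rewrite leq_exp2r ?log2_ltn.
by rewrite -expnM leq_pexp2l //; have := block_exp_ge (log2 n); lia.
Qed.

Lemma block_exp_pow2 t :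
  block_exp (2 ^ t) = (block_exp (2 ^ t.+1 - 1) + (2 ^ t - 1))%N.
Proof.
have t_pos := expn_gt0 2 t.
rewrite /block_exp trunc_expnK // (@log2_eq _ t); rewrite expnS; lia.
Qed.

Section Dyadic.
Variable R : realType.

Lemma Delta_log2_const (v : nat -> R) k n :
  (2 ^ k <= n)%N -> (n.+1 < 2 ^ k.+1)%N -> Delta (v \o log2) n = 0.
Proof.
move=> lo hi; rewrite /Delta /= (@log2_eq n k) ?(@log2_eq n.+1 k) ?subrr //; lia.
Qed.

Lemma dyadic_window_variation (v : nat -> R) m : (1 <= m)%N ->
  \sum_(m <= n < (2 * m).+1) `|Delta (v \o log2) n| =
  `|v (log2 m) - v (log2 m).+1|.
Proof.
move=> m_pos; set j := log2 m.
have lo : (2 ^ j <= m)%N by exact: trunc_logP.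
have hi : (m < 2 ^ j.+1)%N by exact: log2_ltn.
have jpos := expn_gt0 2 j.
have e2 : (2 ^ j.+1 = 2 * 2 ^ j)%N by rewrite expnS.
have e3 : (2 ^ j.+2 = 4 * 2 ^ j)%N by rewrite !expnS mulnA.
rewrite e2 in hi; clearbody j.
set n0 := (2 * 2 ^ j - 1)%N.
have n0_lo : (m <= n0)%N by lia.
have n0_hi : (n0 < (2 * m).+1)%N by lia.
have n0S : n0.+1 = (2 * 2 ^ j)%N by lia.
rewrite (@big_cat_nat _ _ _ n0) ?(ltnW n0_hi) // (@big_cat_nat _ _ _ n0.+1 n0) //.
rewrite big_nat1 /= big_nat_cond big1 => [|n /andP[/andP[n_lo n_hi] _]]; last first.
  by rewrite (@Delta_log2_const _ j) ?normr0 ?e2 //; lia.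
rewrite [X in _ + (_ + X)]big_nat_cond big1 => [|n /andP[/andP[n_lo n_hi] _]]; last first.
  by rewrite (@Delta_log2_const _ j.+1) ?normr0 ?e2 ?e3 //; lia.
rewrite add0r addr0 /Delta /= (@log2_eq n0 j) ?(@log2_eq n0.+1 j.+1) ?e2 ?e3 //; lia.
Qed.

End Dyadic.

Section Sequences.
Variable R : realType.

Lemma sum_inv_mulSn N :
  \sum_(1 <= n < N.+1) ((n * n.+1)%:R : R)^-1 = 1 - (N.+1%:R)^-1.
Proof.
rewrite (@telescope_sumr_eq _ _ _ (fun k => - (k%:R : R)^-1)) //.
  by rewrite invr1 opprK addrC.
move=> k /andP[k_pos _]; rewrite natrM -natr1; field.
by rewrite natr1 !pnatr_eq0 -lt0n k_pos.
Qed.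

Lemma powR_mul_le (x l p a : R) : 1 <= x -> 0 < l -> x * l <= 1 ->
  1 <= p -> a <= p - 1 -> x `^ a * l `^ p <= l.
Proof.
move=> x_ge1 l_pos xl_le1 p_ge1 a_le.
have x_pos : 0 < x by exact: lt_le_trans ltr01 x_ge1.
apply: (@le_trans _ _ (x `^ (p - 1) * l `^ p)).
  by rewrite ler_wpM2r ?powR_ge0 // ler_powR.
rewrite -(mulr_powRB1 (ltW l_pos) (lt_le_trans ltr01 p_ge1)).
rewrite mulrCA -(powRM _ (ltW x_pos) (ltW l_pos)).
rewrite -[X in _ <= X]mulr1 ler_wpM2l ?(ltW l_pos) //.
rewrite -[X in _ <= X](powRr0 (x * l)).
by apply: ger_powR; rewrite ?subr_ge0 // xl_le1 andbT mulr_gt0.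
Qed.

Lemma nneseries_lty (u : nat -> R) m B : (forall n, (m <= n)%N -> 0 <= u n) ->
  (forall N, \sum_(m <= n < N) u n <= B) ->
  (\sum_(m <= n <oo) (u n)%:E < +oo)%E.
Proof.
move=> u_ge0 u_bnd; apply: (@le_lt_trans _ _ B%:E); last exact: ltry.
apply: lime_le; first by apply: is_cvg_nneseries => n mn _; rewrite lee_fin u_ge0.
by apply: nearW => N; rewrite sumEFin lee_fin.
Qed.

Lemma dist_le_sum_variation (u : nat -> R) a b : (a <= b)%N ->
  `|u b - u a| <= \sum_(a <= n < b) `|u n - u n.+1|.
Proof.
move=> ab; rewrite -telescope_sumr //.
by under [X in _ <= X]eq_bigr do rewrite distrC; exact: ler_norm_sum.
Qed.

Lemma R0BV_growth_bounded (b : nat -> R) : R0BV b ->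
  exists M : R, forall m k, (1 <= m)%N -> (m <= k)%N -> b k <= M * b m.
Proof.
move=> [_ [_ [M b_var]]]; exists (M + 1) => m k m_pos mk.
have : `|b k - b m| <= M * b m.
  rewrite -lee_fin; apply: le_trans (b_var m m_pos).
  apply: le_trans (nneseries_lim_ge k _) => //.
  by rewrite sumEFin lee_fin dist_le_sum_variation.
by move=> /(le_trans (ler_norm _)); rewrite mulrDl mul1r -lerBlDr.
Qed.

End Sequences.

Section Construction.
Variable R : realType.

Definition block_value (j : nat) : R := 2^-1 ^+ block_exp j.

Definition lam : nat -> R := block_value \o log2.

Lemma block_value_gt0 j : 0 < block_value j.
Proof. by rewrite exprn_gt0 // invr_gt0. Qed.

Lemma block_value_leS j : block_value j.+1 <= 2 * block_value j.
Proof.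
have -> : block_value j.+1 = 2 * 2^-1 ^+ (block_exp j.+1).+1.
  by rewrite exprS mulrA divff ?mul1r ?pnatr_eq0.
rewrite ler_pM2l // ler_wiXn2l ?block_exp_leS ?invr_ge0 //.
by rewrite invf_le1 // ler1n.
Qed.

Lemma block_value_pow2 t :
  block_value (2 ^ t.+1 - 1) = 2 ^+ (2 ^ t - 1) * block_value (2 ^ t).
Proof.
rewrite /block_value block_exp_pow2 exprD mulrCA -exprMn.
by rewrite divff ?expr1n ?mulr1 // pnatr_eq0.
Qed.

Lemma lam_gt0 n : 0 < lam n.
Proof. exact: block_value_gt0. Qed.

Lemma lam_le_inv_sq n : lam n <= ((n.+1 ^ 2)%:R)^-1.
Proof.
rewrite /lam /= /block_value exprVn lef_pV2 ?posrE ?exprn_gt0 ?ltr0n //.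
by rewrite -natrX ler_nat sq_le_exp2_block_exp.
Qed.

Lemma lam_cvg0 : lam @ \oo --> (0 : R).
Proof.
apply: (@squeeze_cvgr _ _ _ _ (fun=> 0) (@harmonic R)); last 2 first.
- exact: cvg_cst.
- exact: cvg_harmonic.
apply: nearW => n; rewrite (ltW (lam_gt0 n)) /=.
apply: le_trans (lam_le_inv_sq n) _.
by rewrite lef_pV2 ?posrE ?ltr0n ?expn_gt0 // ler_nat expnS expn1 leq_pmull.
Qed.

Lemma lam_window_variation_le m : (1 <= m)%N ->
  \sum_(m <= n < (2 * m).+1) `|Delta lam n| <= 3 * lam m.
Proof.
move=> m_pos; rewrite /lam dyadic_window_variation //=.
have := block_value_leS (log2 m); have := block_value_gt0 (log2 m).
have := block_value_gt0 (log2 m).+1.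
by move=> *; apply: le_trans (ler_normB _ _) _; rewrite !gtr0_norm //; lra.
Qed.

Lemma lam_GBV : GBV lam.
Proof.
split; first by move=> n _; exact/ltW/lam_gt0.
split; first exact: lam_cvg0.
by exists 3; split => //; exact: lam_window_variation_le.
Qed.

Lemma lam_pow2_growth t :
  lam (2 ^ (2 ^ t.+1 - 1)) = 2 ^+ (2 ^ t - 1) * lam (2 ^ (2 ^ t)).
Proof. by rewrite /lam /= !trunc_expnK // block_value_pow2. Qed.

Lemma lam_not_R0BV : ~ R0BV lam.
Proof.
move=> /R0BV_growth_bounded [M lam_bnd].
set t := Num.bound `|M|.
have M_lt_t : M < t%:R by apply: le_lt_trans (ler_norm M) (archi_boundP _).
have t_le : (t <= 2 ^ (2 ^ t - 1))%N.
  have := ltn_expl t (isT : (1 < 2)%N).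
  by have := ltn_expl (2 ^ t - 1) (isT : (1 < 2)%N); lia.
have pow_le_M : 2 ^+ (2 ^ t - 1) <= M.
  rewrite -(ler_pM2r (lam_gt0 (2 ^ (2 ^ t)))) -lam_pow2_growth lam_bnd //.
    by rewrite expn_gt0.
  by rewrite leq_pexp2l // expnS; have := expn_gt0 2 t; lia.
have : (t%:R : R) <= 2 ^+ (2 ^ t - 1) by rewrite -natrX ler_nat.
by lra.
Qed.

Lemma lam_mulSn_le n : (1 <= n)%N -> lam n <= ((n * n.+1)%:R)^-1.
Proof.
move=> n_pos; apply: le_trans (lam_le_inv_sq n) _.
rewrite lef_pV2 ?posrE ?ltr0n ?muln_gt0 ?expn_gt0 ?n_pos // ler_nat.
by rewrite expnS expn1 leq_mul2r leqnSn orbT.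
Qed.

Lemma lam_weighted_series_lty (a p : R) : 1 <= p -> a <= p - 1 ->
  (\sum_(1 <= n <oo) ((n%:R) `^ a * lam n `^ p)%:E < +oo)%E.
Proof.
move=> p_ge1 a_le; apply: (@nneseries_lty _ _ _ 1) => [n _|[|N]].
- by rewrite mulr_ge0 ?powR_ge0.
- by rewrite big_geq.
apply: (@le_trans _ _ (\sum_(1 <= n < N.+1) ((n * n.+1)%:R : R)^-1)).
  rewrite big_nat_cond [X in _ <= X]big_nat_cond.
  apply: ler_sum => n /andP[/andP[n_pos _] _].
  apply: le_trans (lam_mulSn_le n n_pos).
  apply: powR_mul_le; rewrite ?lam_gt0 ?ler1n //.
  apply: le_trans (ler_wpM2l (ler0n _ n) (lam_mulSn_le n n_pos)) _.
  rewrite natrM invfM mulrA divff ?mul1r ?pnatr_eq0 -?lt0n //.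
  by rewrite invf_le1 ?ler1n.
by rewrite sum_inv_mulSn lerBlDr lerDl invr_ge0.
Qed.

End Construction.

Theorem theorem3 (R : realType) :
  exists lam : nat -> R,
    (forall n, (1 <= n)%N -> 0 <= lam n) /\
    GBV lam /\ ~ R0BV lam /\
    forall p gamma : R, 1 < p -> p^-1 - 1 < gamma -> gamma < p^-1 ->
      (\sum_(1 <= n <oo)
         ((n%:R) `^ (p + p * gamma - 2) * (lam n) `^ p)%:E < +oo)%E.
Proof.
exists (lam R); split; first by move=> n _; exact/ltW/lam_gt0.
split; first exact: lam_GBV.
split; first exact: lam_not_R0BV.
move=> p gamma p_gt1 _ gamma_lt; apply: lam_weighted_series_lty; first exact: ltW.
have p_pos : 0 < p by apply: lt_trans p_gt1.
have : p * gamma < 1 by rewrite -(mulfV (lt0r_neq0 p_pos)) ltr_pM2l.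
by lra.
Qed.
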